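(* Fix an integer $n\ge1$. In the $q$-shuffle algebra $\mathbb V$ define the following sets, where $i,j\in\mathbb N$: $$N=\{\tilde G_i\star G_j: i+j=n\},\qquad S=\{G_i\star\tilde G_j: i+j=n\},$$ $$E=\{W_{i+1}\star W_{-j}: i+j=n-1\},\qquad W=\{W_{-i}\star W_{j+1}: i+j=n-1\}.$$ Then the sets $N\cup E$, $N\cup W$, $S\cup E$, $S\cup W$ all have the same linear span.
   Context: Let $\mathbb F$ be a field and let $q\in\mathbb F$ be nonzero and not a root of unity. Let $\mathbb V$ be the free associative $\mathbb F$-algebra on noncommuting $x,y$, with basis the words (including $1$). Juxtaposition denotes concatenation. Set $\langle x,x\rangle=\langle y,y\rangle=2$ and $\langle x,y\rangle=\langle y,x\rangle=-2$. The $q$-shuffle product $\star$ is the bilinear product determined as follows: - $1\star v=v\star 1=v$; - for nontrivial words $u=u_1\cdots u_r$ and $v=v_1\cdots v_s$, $$u\star v=u_1((u_2\cdots u_r)\star v)+v_1(u\star(v_2\cdots v_s))q^{\langle u_1,v_1\rangle+\cdots+\langle u_r,v_1\rangle}.$$ This makes $\mathbb V$ an associative algebra, the $q$-shuffle algebra. For $k\in\mathbb N$: - $W_{-k}=xyx\cdots x$ is the alternating word of length $2k+1$ beginning and ending with $x$; - $W_{k+1}=yxy\cdots y$ is the alternating word of length $2k+1$ beginning and ending with $y$; - $G_k=yxyx\cdots yx$ is the word of length $2k$; - $\tilde G_k=xyxy\cdots xy$ is the word of length $2k$; - $G_0=\tilde G_0=1$. *)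

From mathcomp Require Import all_boot all_order all_algebra.
Set Implicit Arguments. Unset Strict Implicit. Unset Printing Implicit Defensive.
Import Order.TTheory GRing.Theory Num.Theory.
Local Open Scope ring_scope.

Definition word := seq bool.
Definition lx : bool := true.
Definition ly : bool := false.

(* Elements of the free algebra V are given by their coefficient function
   on the basis of words. *)
Definition vec (F : fieldType) := word -> F.

Definition ip (a b : bool) : int := if a == b then 2%:R else - 2%:R.

Definition ipw (u : word) (b : bool) : int := \sum_(a <- u) ip a b.

(* Coefficient of the word w in the q-shuffle product u * v of words
   (recursion on w, following the defining recursion of the q-shuffle). *)
Fixpoint qsh (F : fieldType) (q : F) (u v w : word) {struct w} : F :=
  match u, v with
  | [::], _ => (w == v)%:R
  | _, [::] => (w == u)%:R
  | a :: u', b :: v' =>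
      match w with
      | [::] => 0
      | c :: w' => (c == a)%:R * qsh q u' v w'
                   + (c == b)%:R * q ^ (ipw u b) * qsh q u v' w'
      end
  end.

Fixpoint alt (a : bool) (m : nat) : word :=
  if m is m'.+1 then a :: alt (~~ a) m' else [::].

Definition Wneg (k : nat) : word := alt lx (2 * k).+1.   (* W_{-k}   *)
Definition Wpos (k : nat) : word := alt ly (2 * k).+1.   (* W_{k+1}  *)
Definition Gw (k : nat) : word := alt ly (2 * k).
Definition Gtw (k : nat) : word := alt lx (2 * k).

Definition Nset (F : fieldType) (q : F) (n : nat) : seq (vec F) :=
  [seq qsh q (Gtw i) (Gw (n - i)) | i <- iota 0 n.+1].
Definition Sset (F : fieldType) (q : F) (n : nat) : seq (vec F) :=
  [seq qsh q (Gw i) (Gtw (n - i)) | i <- iota 0 n.+1].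
Definition Eset (F : fieldType) (q : F) (n : nat) : seq (vec F) :=
  [seq qsh q (Wpos i) (Wneg (n.-1 - i)) | i <- iota 0 n].
Definition Wset (F : fieldType) (q : F) (n : nat) : seq (vec F) :=
  [seq qsh q (Wneg i) (Wpos (n.-1 - i)) | i <- iota 0 n].

Definition in_span (F : fieldType) (L : seq (vec F)) (f : vec F) : Prop :=
  exists c : nat -> F,
    forall w, f w = \sum_(i < size L) c i * nth (fun _ => 0) L i w.

Definition same_span (F : fieldType) (L1 L2 : seq (vec F)) : Prop :=
  forall f : vec F, in_span L1 f <-> in_span L2 f.

From mathcomp Require Import all_boot all_order all_algebra.
From mathcomp Require Import ring zify.
Import GRing.Theory.
Local Open Scope ring_scope.
Set Implicit Arguments. Unset Strict Implicit. Unset Printing Implicit Defensive.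

(* Write [u, v] = u * v - v * u.  The two identities
     [W_{-i}, W_{j+2}] - [W_{-i-1}, W_{j+1}]
        = (1 - q^-2) (~G_{i+1} * G_{j+1} - ~G_{j+1} * G_{i+1}),
     [G_i, ~G_{j+1}] - [G_{i+1}, ~G_j]
        = (q^2 - 1) (W_{i+1} * W_{-j} - W_{j+1} * W_{-i})
   are checked coefficientwise by induction on the word: the coefficient of
   c w in u * v only involves coefficients of w in products of tails, and the
   first-letter derivatives of the two identities are combinations of the
   identities themselves.  Telescoping them puts [W_{-i}, W_{j+1}] (i + j = n - 1)
   in span N, and [G_i, ~G_j] (i + j = n) in span E and, by the symmetry
   [W_{-i}, W_{j+1}] = [W_{-j}, W_{i+1}] they imply, in span W.  Every element
   of W, E, S, N is such a commutator plus the reversed product, which lies in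
   E, W, N, S respectively; so all four spans agree. *)

Section Span.
Variable F : fieldType.
Implicit Types (L A B : seq (vec F)) (f g : vec F).

Local Notation nthv L i := (nth (fun _ => 0) L i).

Definition spans L1 L2 := forall i, (i < size L2)%N -> in_span L1 (nthv L2 i).

Lemma in_span_eq L f g : in_span L f -> f =1 g -> in_span L g.
Proof. by move=> [c hc] e; exists c => w; rewrite -e hc. Qed.

Lemma in_span0 L : in_span L (fun=> 0).
Proof. by exists (fun=> 0) => w; rewrite big1 // => i _; rewrite mul0r. Qed.

Lemma in_spanD L f g : in_span L f -> in_span L g -> in_span L (fun w => f w + g w).
Proof.
move=> [c hc] [d hd]; exists (fun i => c i + d i) => w.
by rewrite hc hd -big_split; apply: eq_bigr => i _; rewrite mulrDl.
Qed.

Lemma in_spanZ L k f : in_span L f -> in_span L (fun w => k * f w).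
Proof.
move=> [c hc]; exists (fun i => k * c i) => w.
by rewrite hc mulr_sumr; apply: eq_bigr => i _; rewrite mulrA.
Qed.

Lemma in_spanB L f g : in_span L f -> in_span L g -> in_span L (fun w => f w - g w).
Proof.
by move=> hf hg; apply: in_span_eq (in_spanD hf (in_spanZ (-1) hg)) _ => w; rewrite mulN1r.
Qed.

Lemma in_span_add L f g :
  in_span L g -> in_span L (fun w => f w - g w) -> in_span L f.
Proof.
by move=> hg hfg; apply: in_span_eq (in_spanD hg hfg) _ => w; rewrite addrC subrK.
Qed.

Lemma in_span_nth L i : (i < size L)%N -> in_span L (nthv L i).
Proof.
move=> hi; exists (fun j => (j == i)%:R) => w.
rewrite (bigD1 (Ordinal hi)) //= eqxx mul1r big1 ?addr0 // => j hj.
suff /negbTE -> : (j != i :> nat) by rewrite mul0r.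
by apply: contra hj => /eqP e; apply/eqP/val_inj.
Qed.

Lemma in_span_spans L1 L2 f : spans L1 L2 -> in_span L2 f -> in_span L1 f.
Proof.
move=> h [c hc].
suff hm m : (m <= size L2)%N -> in_span L1 (fun w => \sum_(0 <= i < m) c i * nthv L2 i w).
  by apply: in_span_eq (hm _ (leqnn _)) _ => w; rewrite hc big_mkord.
elim: m => [|m IH] hm; first by apply: in_span_eq (in_span0 L1) _ => w; rewrite big_nil.
apply: in_span_eq (in_spanD (IH (ltnW hm)) (in_spanZ (c m) (h m hm))) _ => w.
by rewrite big_nat_recr.
Qed.

Lemma spans_trans L1 L2 L3 : spans L1 L2 -> spans L2 L3 -> spans L1 L3.
Proof. by move=> h12 h23 i /h23; apply: in_span_spans. Qed.

Lemma same_spanP L1 L2 : spans L1 L2 -> spans L2 L1 -> same_span L1 L2.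
Proof. by move=> h12 h21 f; split; apply: in_span_spans. Qed.

Lemma spans_cat L A B : spans L A -> spans L B -> spans L (A ++ B).
Proof.
move=> hA hB i; rewrite size_cat nth_cat.
by case: (ltnP i (size A)) => [hi _|hi hs]; [apply: hA | apply: hB; rewrite ltn_subLR].
Qed.

Lemma spans_catl A B : spans (A ++ B) A.
Proof.
move=> i hi; have := @in_span_nth (A ++ B) i.
by rewrite nth_cat hi size_cat; apply; apply: ltn_addr.
Qed.

Lemma spans_catr A B : spans (A ++ B) B.
Proof.
move=> i hi; have := @in_span_nth (A ++ B) (size A + i).
by rewrite nth_cat size_cat ltn_add2l (ltnNge (size A + i)) leq_addr addKn; apply.
Qed.

Lemma in_span_catl A B f : in_span A f -> in_span (A ++ B) f.
Proof. exact/in_span_spans/spans_catl. Qed.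

Lemma in_span_catr A B f : in_span B f -> in_span (A ++ B) f.
Proof. exact/in_span_spans/spans_catr. Qed.

Lemma in_span_map_iota (h : nat -> vec F) k i :
  (i < k)%N -> in_span [seq h j | j <- iota 0 k] (h i).
Proof.
move=> hi; have := @in_span_nth [seq h j | j <- iota 0 k] i.
by rewrite size_map size_iota (nth_map 0%N) ?size_iota // nth_iota //; apply.
Qed.

Lemma spans_map_iota L (h : nat -> vec F) k :
  (forall i, (i < k)%N -> in_span L (h i)) -> spans L [seq h j | j <- iota 0 k].
Proof.
move=> hL i; rewrite size_map size_iota => hi.
by rewrite (nth_map 0%N) ?size_iota // nth_iota //; apply: hL.
Qed.

End Span.

Section QShuffleWords.
Variables (F : fieldType) (q : F).

Lemma qsh_nil_l v w : qsh q [::] v w = (w == v)%:R.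
Proof. by case: w. Qed.

Lemma qsh_nil_r u w : qsh q u [::] w = (w == u)%:R.
Proof. by case: u => [|a u]; case: w. Qed.

Lemma ipw_nil b : ipw [::] b = 0.
Proof. by rewrite /ipw big_nil. Qed.

Lemma ipw_cons a u b : ipw (a :: u) b = ip a b + ipw u b.
Proof. by rewrite /ipw big_cons. Qed.

Lemma qsh_cons u v c w :
  qsh q u v (c :: w) =
  (if u is a :: u' then (c == a)%:R * qsh q u' v w else 0) +
  (if v is b :: v' then (c == b)%:R * q ^ ipw u b * qsh q u v' w else 0).
Proof.
case: u => [|a u]; case: v => [|b v] //=.
- by rewrite add0r.
- rewrite add0r ipw_nil expr0z mulr1 qsh_nil_l eqseq_cons.
  by case: (c == b); rewrite ?mul1r ?mul0r.
- rewrite addr0 qsh_nil_r eqseq_cons.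
  by case: (c == a); rewrite ?mul1r ?mul0r.
Qed.

End QShuffleWords.

Lemma WnegE k : Wneg k = lx :: Gw k. Proof. by []. Qed.
Lemma WposE k : Wpos k = ly :: Gtw k. Proof. by []. Qed.
Lemma Gw0 : Gw 0 = [::]. Proof. by []. Qed.
Lemma Gtw0 : Gtw 0 = [::]. Proof. by []. Qed.
Lemma GwS k : Gw k.+1 = ly :: Wneg k. Proof. by rewrite /Gw /Wneg mulnS. Qed.
Lemma GtwS k : Gtw k.+1 = lx :: Wpos k. Proof. by rewrite /Gtw /Wpos mulnS. Qed.

Lemma ipw_Gw k b : ipw (Gw k) b = 0.
Proof.
elim: k b => [|k IH] b; first by rewrite Gw0 ipw_nil.
by rewrite GwS WnegE !ipw_cons IH addr0; case: b.
Qed.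

Lemma ipw_Gtw k b : ipw (Gtw k) b = 0.
Proof.
elim: k b => [|k IH] b; first by rewrite Gtw0 ipw_nil.
by rewrite GtwS WposE !ipw_cons IH addr0; case: b.
Qed.

Lemma PoszS_sub1 i : Posz i.+1 - 1 = i.
Proof. by rewrite -addn1 PoszD addrK. Qed.

(* The four families are indexed by integers, a negative index standing for the
   zero vector (osh of None is 0); the identities then hold uniformly, with no
   boundary cases at index 0. *)
Definition fam (f : nat -> word) (a : int) : option word :=
  if a is Posz k then Some (f k) else None.

Lemma fam_pred f (a : int) :
  fam f (a - 1) = if a is Posz k.+1 then Some (f k) else None.
Proof. by case: a => [[|k]|k] //; rewrite PoszS_sub1. Qed.

Section FamilyProducts.
Variables (F : fieldType) (q : F).

Definition osh (o1 o2 : option word) : vec F :=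
  fun w => if (o1, o2) is (Some u, Some v) then qsh q u v w else 0.

Local Notation Wn := (fam Wneg).
Local Notation Wp := (fam Wpos).
Local Notation G := (fam Gw).
Local Notation Gt := (fam Gtw).

Lemma osh_nil o1 o2 : osh o1 o2 [::] = (o1 == Some [::])%:R * (o2 == Some [::])%:R.
Proof.
by case: o1 => [[|a u]|]; case: o2 => [[|b v]|]; rewrite /osh /= ?mul0r ?mulr0 ?mul1r.
Qed.

Lemma Wn_neq_nil a : (Wn a == Some [::]) = false. Proof. by case: a. Qed.
Lemma Wp_neq_nil a : (Wp a == Some [::]) = false. Proof. by case: a. Qed.
Lemma G_eq_nil a : (G a == Some [::]) = (Gt a == Some [::]).
Proof. by case: a => [[|k]|k] //; rewrite /= GwS GtwS. Qed.

Ltac unfold_fam a b :=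
  let i := fresh "i" in let j := fresh "j" in
  rewrite ?fam_pred;
  case: a => [[|i]|i]; case: b => [[|j]|j];
  rewrite /osh /fam ?(Gw0, Gtw0, GwS, GtwS, WnegE, WposE) ?qsh_cons
          ?(ipw_cons, ipw_Gw, ipw_Gtw, ipw_nil) /= -?(WnegE, WposE, GwS, GtwS);
  rewrite ?mul1r ?mul0r ?mulr0 ?add0r ?addr0 ?expr0z ?mulr1 //; try reflexivity.

(* Evaluating at c :: w takes the left derivative by the letter c; by qsh_cons,
   the x- and y-derivatives of all products occurring in the identities are: *)
Lemma oshx_WnWp a b w : osh (Wn a) (Wp b) (lx :: w) = osh (G a) (Wp b) w.
Proof. unfold_fam a b. Qed.
Lemma oshx_WpWn a b w : osh (Wp a) (Wn b) (lx :: w) = q ^- 2 * osh (Wp a) (G b) w.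
Proof. unfold_fam a b. Qed.
Lemma oshx_GtG a b w : osh (Gt a) (G b) (lx :: w) = osh (Wp (a - 1)) (G b) w.
Proof. unfold_fam a b. Qed.
Lemma oshx_GGt a b w : osh (G a) (Gt b) (lx :: w) = osh (G a) (Wp (b - 1)) w.
Proof. unfold_fam a b. Qed.
Lemma oshx_GWp a b w : osh (G a) (Wp b) (lx :: w) = 0.
Proof. unfold_fam a b. Qed.
Lemma oshx_WpG a b w : osh (Wp a) (G b) (lx :: w) = 0.
Proof. unfold_fam a b. Qed.
Lemma oshx_WnGt a b w :
  osh (Wn a) (Gt b) (lx :: w) = osh (G a) (Gt b) w + q ^+ 2 * osh (Wn a) (Wp (b - 1)) w.
Proof. unfold_fam a b. Qed.
Lemma oshx_GtWn a b w :
  osh (Gt a) (Wn b) (lx :: w) = osh (Wp (a - 1)) (Wn b) w + osh (Gt a) (G b) w.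
Proof. unfold_fam a b. Qed.
Lemma oshy_WnWp a b w : osh (Wn a) (Wp b) (ly :: w) = q ^- 2 * osh (Wn a) (Gt b) w.
Proof. unfold_fam a b. Qed.
Lemma oshy_WpWn a b w : osh (Wp a) (Wn b) (ly :: w) = osh (Gt a) (Wn b) w.
Proof. unfold_fam a b. Qed.
Lemma oshy_GtG a b w : osh (Gt a) (G b) (ly :: w) = osh (Gt a) (Wn (b - 1)) w.
Proof. unfold_fam a b. Qed.
Lemma oshy_GGt a b w : osh (G a) (Gt b) (ly :: w) = osh (Wn (a - 1)) (Gt b) w.
Proof. unfold_fam a b. Qed.
Lemma oshy_GWp a b w :
  osh (G a) (Wp b) (ly :: w) = osh (Wn (a - 1)) (Wp b) w + osh (G a) (Gt b) w.
Proof. unfold_fam a b. Qed.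
Lemma oshy_WpG a b w :
  osh (Wp a) (G b) (ly :: w) = osh (Gt a) (G b) w + q ^+ 2 * osh (Wp a) (Wn (b - 1)) w.
Proof. unfold_fam a b. Qed.
Lemma oshy_WnGt a b w : osh (Wn a) (Gt b) (ly :: w) = 0.
Proof. unfold_fam a b. Qed.
Lemma oshy_GtWn a b w : osh (Gt a) (Wn b) (ly :: w) = 0.
Proof. unfold_fam a b. Qed.

Hypothesis q_neq0 : q != 0.

Definition relW (a b : int) : vec F := fun w =>
  osh (Wn (a - 1)) (Wp b) w - osh (Wp b) (Wn (a - 1)) w
  - (osh (Wn a) (Wp (b - 1)) w - osh (Wp (b - 1)) (Wn a) w)
  - (1 - q ^- 2) * (osh (Gt a) (G b) w - osh (Gt b) (G a) w).

Definition relG (a b : int) : vec F := fun w =>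
  osh (G (a - 1)) (Gt b) w - osh (Gt b) (G (a - 1)) w
  - (osh (G a) (Gt (b - 1)) w - osh (Gt (b - 1)) (G a) w)
  - (q ^+ 2 - 1) * (osh (Wp (a - 1)) (Wn (b - 1)) w - osh (Wp (b - 1)) (Wn (a - 1)) w).

Ltac derive_osh := rewrite
  ?(oshx_WnWp, oshx_WpWn, oshx_GtG, oshx_GGt, oshx_GWp, oshx_WpG, oshx_WnGt, oshx_GtWn,
    oshy_WnWp, oshy_WpWn, oshy_GtG, oshy_GGt, oshy_GWp, oshy_WpG, oshy_WnGt, oshy_GtWn).

Lemma relW_xx a b w : relW a b [:: lx, lx & w] = 0.
Proof. rewrite /relW; derive_osh; field; exact: q_neq0. Qed.

Lemma relW_xy a b w : relW a b [:: lx, ly & w] = relG a b w + relW (a - 1) b w.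
Proof. rewrite /relW /relG; derive_osh; field; exact: q_neq0. Qed.

Lemma relW_yx a b w : relW a b [:: ly, lx & w] = q ^- 2 * relG a b w + relW a (b - 1) w.
Proof. rewrite /relW /relG; derive_osh; field; exact: q_neq0. Qed.

Lemma relW_yy a b w : relW a b [:: ly, ly & w] = 0.
Proof. rewrite /relW; derive_osh; field; exact: q_neq0. Qed.

Lemma relG_x a b w : relG a b (lx :: w) = relW a (b - 1) (lx :: w).
Proof. rewrite /relW /relG; derive_osh; field; exact: q_neq0. Qed.

Lemma relG_y a b w : relG a b (ly :: w) = q ^+ 2 * relW (a - 1) b (ly :: w).
Proof. rewrite /relW /relG; derive_osh; field; exact: q_neq0. Qed.

Lemma rel_nil a b :
  [/\ relW a b [::] = 0, relW a b [:: lx] = 0, relW a b [:: ly] = 0 & relG a b [::] = 0].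
Proof.
rewrite /relW /relG; derive_osh.
by rewrite !osh_nil !Wn_neq_nil !Wp_neq_nil !G_eq_nil !mulr0n; split; ring.
Qed.

Lemma rel_eq0 w a b :
  [/\ relW a b w = 0, relW a b (lx :: w) = 0, relW a b (ly :: w) = 0 & relG a b w = 0].
Proof.
elim: w a b => [|[] w IH] a b; first exact: rel_nil.
- have [_ _ _ hG] := IH a b; have [hW hWx _ _] := IH a (b - 1).
  split; first by case: (IH a b).
  + exact: relW_xx.
  + by rewrite relW_yx hG hW mulr0 addr0.
  + by rewrite relG_x hWx.
- have [_ _ _ hG] := IH a b; have [hW _ hWy _] := IH (a - 1) b.
  split; first by case: (IH a b).
  + by rewrite relW_xy hG hW addr0.
  + exact: relW_yy.
  + by rewrite relG_y hWy mulr0.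
Qed.

End FamilyProducts.

Section Commutators.
Variables (F : fieldType) (q : F).

Definition qcomm (u v : word) : vec F := fun w => qsh q u v w - qsh q v u w.

Lemma in_span_qcommC L u v : in_span L (qcomm u v) -> in_span L (qcomm v u).
Proof. by move=> h; apply: in_span_eq (in_spanZ (-1) h) _ => w; rewrite /qcomm; ring. Qed.

Hypothesis q_neq0 : q != 0.

Lemma qcomm_W_step i j w :
  qcomm (Wneg i) (Wpos j.+1) w - qcomm (Wneg i.+1) (Wpos j) w
  = (1 - q ^- 2) * (qsh q (Gtw i.+1) (Gw j.+1) w - qsh q (Gtw j.+1) (Gw i.+1) w).
Proof.
have [+ _ _ _] := rel_eq0 q_neq0 w i.+1 j.+1.
by rewrite /relW !PoszS_sub1 => /subr0_eq.
Qed.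

Lemma qcomm_W0l j w :
  qcomm (Wneg 0) (Wpos j) w
  = (1 - q ^- 2) * (qsh q (Gtw j.+1) (Gw 0) w - qsh q (Gtw 0) (Gw j.+1) w).
Proof.
have [+ _ _ _] := rel_eq0 q_neq0 w 0 j.+1.
rewrite /relW /osh PoszS_sub1 /= subrr sub0r => /subr0_eq h.
by rewrite -[LHS]opprK h; ring.
Qed.

Lemma qcomm_W0r j w :
  qcomm (Wneg j) (Wpos 0) w
  = (1 - q ^- 2) * (qsh q (Gtw j.+1) (Gw 0) w - qsh q (Gtw 0) (Gw j.+1) w).
Proof.
have [+ _ _ _] := rel_eq0 q_neq0 w j.+1 0.
by rewrite /relW /osh PoszS_sub1 /= subrr subr0 => /subr0_eq.
Qed.

Lemma qcomm_G_step i j w :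
  qcomm (Gw i) (Gtw j.+1) w - qcomm (Gw i.+1) (Gtw j) w
  = (q ^+ 2 - 1) * (qsh q (Wpos i) (Wneg j) w - qsh q (Wpos j) (Wneg i) w).
Proof.
have [_ _ _ +] := rel_eq0 q_neq0 w i.+1 j.+1.
by rewrite /relG !PoszS_sub1 => /subr0_eq.
Qed.

Lemma qcomm_W_sym i j w : qcomm (Wneg i) (Wpos j) w = qcomm (Wneg j) (Wpos i) w.
Proof.
elim: i j => [|i IH] j; first by rewrite qcomm_W0l qcomm_W0r.
have e1 : qcomm (Wneg i.+1) (Wpos j) w = qcomm (Wneg i) (Wpos j.+1) w
  - (1 - q ^- 2) * (qsh q (Gtw i.+1) (Gw j.+1) w - qsh q (Gtw j.+1) (Gw i.+1) w).
  by rewrite -qcomm_W_step; ring.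
have e2 : qcomm (Wneg j) (Wpos i.+1) w = qcomm (Wneg j.+1) (Wpos i) w
  + (1 - q ^- 2) * (qsh q (Gtw j.+1) (Gw i.+1) w - qsh q (Gtw i.+1) (Gw j.+1) w).
  by rewrite -qcomm_W_step; ring.
by rewrite e1 e2 IH; ring.
Qed.

End Commutators.

Section Membership.
Variables (F : fieldType) (q : F).

Lemma in_span_Nset n i j : (i + j = n)%N -> in_span (Nset q n) (qsh q (Gtw i) (Gw j)).
Proof.
move=> <-; have := @in_span_map_iota _ (fun k => qsh q (Gtw k) (Gw (i + j - k))) (i + j).+1 i.
by rewrite addKn; apply; lia.
Qed.

Lemma in_span_Sset n i j : (i + j = n)%N -> in_span (Sset q n) (qsh q (Gw i) (Gtw j)).
Proof.
move=> <-; have := @in_span_map_iota _ (fun k => qsh q (Gw k) (Gtw (i + j - k))) (i + j).+1 i.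
by rewrite addKn; apply; lia.
Qed.

Lemma in_span_Eset m i j : (i + j = m)%N -> in_span (Eset q m.+1) (qsh q (Wpos i) (Wneg j)).
Proof.
move=> <-; have := @in_span_map_iota _ (fun k => qsh q (Wpos k) (Wneg (i + j - k))) (i + j).+1 i.
by rewrite addKn; apply; lia.
Qed.

Lemma in_span_Wset m i j : (i + j = m)%N -> in_span (Wset q m.+1) (qsh q (Wneg i) (Wpos j)).
Proof.
move=> <-; have := @in_span_map_iota _ (fun k => qsh q (Wneg k) (Wpos (i + j - k))) (i + j).+1 i.
by rewrite addKn; apply; lia.
Qed.

End Membership.

Section Spanning.
Variables (F : fieldType) (q : F) (m : nat).

Local Notation N := (Nset q m.+1).
Local Notation S := (Sset q m.+1).
Local Notation E := (Eset q m.+1).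
Local Notation W := (Wset q m.+1).

Lemma spans_NX_S X :
  (forall i j, (i + j = m.+1)%N -> in_span X (qcomm q (Gw i) (Gtw j))) -> spans (N ++ X) S.
Proof.
move=> hX; apply: spans_map_iota => i hi.
apply: (@in_span_add _ _ _ (qsh q (Gtw (m.+1 - i)) (Gw i))).
  by apply/in_span_catl/in_span_Nset; lia.
by apply/in_span_catr/hX; lia.
Qed.

Lemma spans_SX_N X :
  (forall i j, (i + j = m.+1)%N -> in_span X (qcomm q (Gw i) (Gtw j))) -> spans (S ++ X) N.
Proof.
move=> hX; apply: spans_map_iota => i hi.
apply: (@in_span_add _ _ _ (qsh q (Gw (m.+1 - i)) (Gtw i))).
  by apply/in_span_catl/in_span_Sset; lia.
by apply/in_span_catr/in_span_qcommC/hX; lia.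
Qed.

Hypothesis q_neq0 : q != 0.

Lemma qcomm_W_in_span_N i j : (i + j = m)%N -> in_span N (qcomm q (Wneg i) (Wpos j)).
Proof.
elim: i j => [|i IH] j hij.
  have hG1 : in_span N (qsh q (Gtw j.+1) (Gw 0)) by apply: in_span_Nset; lia.
  have hG0 : in_span N (qsh q (Gtw 0) (Gw j.+1)) by apply: in_span_Nset; lia.
  by apply: in_span_eq (in_spanZ (1 - q ^- 2) (in_spanB hG1 hG0)) _ => w; rewrite qcomm_W0l.
have hA : in_span N (fun w => (1 - q ^- 2) *
    (qsh q (Gtw i.+1) (Gw j.+1) w - qsh q (Gtw j.+1) (Gw i.+1) w)).
  by apply/in_spanZ/in_spanB; apply: in_span_Nset; lia.
apply: in_span_eq (in_spanB (IH j.+1 _) hA) _; first lia.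
by move=> w; rewrite -qcomm_W_step //; ring.
Qed.

Lemma qcomm_G_in_span X :
  (forall i j, (i + j = m)%N ->
     in_span X (fun w => qsh q (Wpos i) (Wneg j) w - qsh q (Wpos j) (Wneg i) w)) ->
  forall i j, (i + j = m.+1)%N -> in_span X (qcomm q (Gw i) (Gtw j)).
Proof.
move=> hX; elim=> [|i IH] j hij.
  by apply: in_span_eq (in_span0 X) _ => w; rewrite /qcomm Gw0 qsh_nil_l qsh_nil_r subrr.
have /(in_spanZ (q ^+ 2 - 1)) hB : in_span X (fun w =>
    qsh q (Wpos i) (Wneg j) w - qsh q (Wpos j) (Wneg i) w) by apply: hX; lia.
apply: in_span_eq (in_spanB (IH j.+1 _) hB) _; first lia.
by move=> w; rewrite -qcomm_G_step //; ring.
Qed.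

Lemma qcomm_G_in_span_E i j : (i + j = m.+1)%N -> in_span E (qcomm q (Gw i) (Gtw j)).
Proof. by apply: qcomm_G_in_span => i' j' h; apply: in_spanB; apply: in_span_Eset; lia. Qed.

Lemma qcomm_G_in_span_W i j : (i + j = m.+1)%N -> in_span W (qcomm q (Gw i) (Gtw j)).
Proof.
apply: qcomm_G_in_span => i' j' h.
have hW : in_span W (fun w => qsh q (Wneg j') (Wpos i') w - qsh q (Wneg i') (Wpos j') w).
  by apply: in_spanB; apply: in_span_Wset; lia.
apply: in_span_eq hW _ => w.
by rewrite -[RHS]subr0 -(subrr (qcomm q (Wneg i') (Wpos j') w)) {2}qcomm_W_sym // /qcomm; ring.
Qed.

Lemma spans_NE_W : spans (N ++ E) W.
Proof.
apply: spans_map_iota => i hi.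
apply: (@in_span_add _ _ _ (qsh q (Wpos (m - i)) (Wneg i))).
  by apply/in_span_catr/in_span_Eset; lia.
by apply/in_span_catl/qcomm_W_in_span_N; lia.
Qed.

Lemma spans_NW_E : spans (N ++ W) E.
Proof.
apply: spans_map_iota => i hi.
apply: (@in_span_add _ _ _ (qsh q (Wneg (m - i)) (Wpos i))).
  by apply/in_span_catr/in_span_Wset; lia.
by apply/in_span_catl/in_span_qcommC/qcomm_W_in_span_N; lia.
Qed.

End Spanning.

Theorem proposition7p2 (F : fieldType) (q : F) (n : nat)
  (hq0 : q != 0) (hq : forall m : nat, (0 < m)%N -> q ^+ m != 1)
  (hn : (1 <= n)%N) :
  let NE := Nset q n ++ Eset q n in
  let NW := Nset q n ++ Wset q n in
  let SE := Sset q n ++ Eset q n in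
  let SW := Sset q n ++ Wset q n in
  [/\ same_span NE NW, same_span NE SE & same_span NE SW].
Proof.
case: n hn => // m _ NE NW SE SW; rewrite {}/NE {}/NW {}/SE {}/SW.
have hE := qcomm_G_in_span_E (m := m) hq0; have hW := qcomm_G_in_span_W (m := m) hq0.
have hNW_E := spans_NW_E (m := m) hq0.
split; apply: same_spanP; apply: spans_cat.
- exact: spans_catl.
- exact: spans_NE_W.
- exact: spans_catl.
- exact: hNW_E.
- exact: spans_NX_S hE.
- exact: spans_catr.
- exact: spans_SX_N hE.
- exact: spans_catr.
- exact: spans_NX_S hE.
- exact: spans_NE_W.
- exact: spans_SX_N hW.
- apply: (spans_trans _ hNW_E); apply: spans_cat; [exact: spans_SX_N hW | exact: spans_catr].
Qed.
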